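(* Let $T$ be a regular $n$-IET, $n\ge1$, over the ordered alphabet $\mathcal{A}$ with permutation $\pi\in S_{\mathcal{A}}$, and let $\mathcal{L}(T)$ be its language. Then every return word in $\mathcal{L}(T)$ is $\pi$-clustering for $\mathcal{A}$; i.e., for every $u\in\mathcal{L}(T)$ and every $w\in\mathcal{R}(u)$, $w$ is $\pi$-clustering.
   Context: An $n$-IET $T$ on $I=[\ell,r)$ over $\mathcal{A}=\{a_1<\dots<a_n\}$ is given by a partition of $I$ into left-closed right-open intervals $(I_a)_{a\in\mathcal{A}}$ of positive length ordered left to right by the order of $\mathcal{A}$, and a permutation $\pi$ of $\mathcal{A}$; $T(x)=x+\tau_a$ on $I_a$ with $\tau_a=\sum_{b:\,\pi^{-1}(b)<\pi^{-1}(a)}|I_b|-\sum_{b<a}|I_b|$. The set of formal discontinuities is $D(T)=\{\ell+\sum_{b<a}|I_b|: a\in\mathcal{A}\}\setminus\{\ell\}$; $T$ is regular (Keane condition) if the orbits $\{T^m(x):m\in\mathbb{Z}\}$ of the points of $D(T)$ are infinite and pairwise disjoint. Trajectories $\Omega_T(x)=w_0w_1\cdots$ with $w_i=a$ iff $T^i(x)\in I_a$; $\mathcal{L}(T)$ is the set of finite factors of all trajectories. Return words: $\mathcal{R}(u)=\{w\in\mathcal{A}^*: wu\in(\mathcal{L}(T)\cap u\mathcal{A}^* )\setminus\mathcal{A}^+u\mathcal{A}^+\}$. For a word $v$ of length $m$, $\mathrm{bwt}_{\mathcal{A}}(v)$ is the word of last letters of the $m$ cyclic rotations of $v$ sorted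 lexicographically w.r.t. the order of $\mathcal{A}$; $v$ is $\pi$-clustering for $\mathcal{A}$ if $\mathrm{bwt}_{\mathcal{A}}(v)=\pi(a_1)^{k_1}\cdots\pi(a_n)^{k_n}$ with $k_i=|v|_{\pi(a_i)}$. *)

From mathcomp Require Import all_boot all_order all_algebra all_fingroup.
From mathcomp Require Import boolp classical_sets cardinality reals.
Set Implicit Arguments. Unset Strict Implicit. Unset Printing Implicit Defensive.
Import Order.TTheory GRing.Theory Num.Theory.
Local Open Scope ring_scope.
Local Open Scope classical_set_scope.

(* Alphabet: 'I_n = {0 < 1 < ... < n-1} with the natural order.
   An n-IET is given by lengths lam : 'I_n -> R (positive), a left endpoint l,
   and a permutation pi : {perm 'I_n}. *)

Definition lsum (R : realType) (n : nat) (lam : 'I_n -> R) (a : 'I_n) : R :=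
  \sum_(b < n | (b < a)%N) lam b.

Definition left_end (R : realType) (n : nat) (lam : 'I_n -> R) (l : R) (a : 'I_n) : R :=
  l + lsum lam a.

Definition in_Ia (R : realType) (n : nat) (lam : 'I_n -> R) (l : R) (a : 'I_n) (x : R) : bool :=
  (left_end lam l a <= x) && (x < left_end lam l a + lam a).

Definition in_I (R : realType) (n : nat) (lam : 'I_n -> R) (l : R) (x : R) : bool :=
  (l <= x) && (x < l + \sum_(b < n) lam b).

Definition tau (R : realType) (n : nat) (pi : {perm 'I_n}) (lam : 'I_n -> R) (a : 'I_n) : R :=
  \sum_(b < n | ((pi^-1)%g b < (pi^-1)%g a)%N) lam b - lsum lam a.

(* the IET T : T x = x + tau_a for x in I_a (identity outside I) *)
Definition iet (R : realType) (n : nat) (pi : {perm 'I_n}) (lam : 'I_n -> R) (l : R) (x : R) : R :=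
  x + \sum_(a < n) (if in_Ia lam l a x then tau pi lam a else 0).

(* the orbit {T^m x : m \in Z}; since T is a bijection of I,
   T^(-m) x = y iff y \in I and T^m y = x *)
Definition iet_orbit (R : realType) (n : nat) (pi : {perm 'I_n}) (lam : 'I_n -> R) (l : R)
  (x : R) : set R :=
  [set y | (y = x \/ in_I lam l y) /\
           exists m : nat, iter m (iet pi lam l) x = y \/ iter m (iet pi lam l) y = x].

Definition discont (R : realType) (n : nat) (lam : 'I_n -> R) (l : R) : set R :=
  [set d | exists a : 'I_n, d = left_end lam l a /\ d <> l].

Definition regular (R : realType) (n : nat) (pi : {perm 'I_n}) (lam : 'I_n -> R) (l : R) : Prop :=
  (forall d, discont lam l d -> infinite_set (iet_orbit pi lam l d)) /\
  (forall d1 d2, discont lam l d1 -> discont lam l d2 -> d1 <> d2 ->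
     iet_orbit pi lam l d1 `&` iet_orbit pi lam l d2 = set0).

(* u is a factor of some trajectory Omega_T(x), x \in I :
   u = w_k w_{k+1} ... w_{k+|u|-1} with w_i = a iff T^i x \in I_a *)
Definition in_lang (R : realType) (n : nat) (pi : {perm 'I_n}) (lam : 'I_n -> R) (l : R)
  (u : seq 'I_n) : Prop :=
  exists x, in_I lam l x /\ exists k : nat,
    forall (i : nat) (a : 'I_n), onth u i = Some a ->
      in_Ia lam l a (iter (k + i) (iet pi lam l) x).

(* w \in R(u) : wu \in (L(T) \cap u A^* ) \ A^+ u A^+ *)
Definition return_word (R : realType) (n : nat) (pi : {perm 'I_n}) (lam : 'I_n -> R) (l : R)
  (u w : seq 'I_n) : Prop :=
  [/\ in_lang pi lam l (w ++ u),
      prefix u (w ++ u) &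
      ~ (exists p s : seq 'I_n, [/\ (0 < size p)%N, (0 < size s)%N & w ++ u = p ++ u ++ s])].

Fixpoint lex_le (n : nat) (s t : seq 'I_n) : bool :=
  match s, t with
  | [::], _ => true
  | _ :: _, [::] => false
  | x :: s', y :: t' => (x < y)%N || ((x == y) && lex_le s' t')
  end.

Definition bwt (n : nat) (v : seq 'I_n) : seq 'I_n :=
  pmap (fun r => ohead (rev r))
       (sort (@lex_le n) [seq rot i v | i <- iota 0 (size v)]).

Definition pi_clustering (n : nat) (pi : {perm 'I_n}) (v : seq 'I_n) : Prop :=
  bwt v = flatten [seq nseq (count_mem (pi a) v) (pi a) | a <- enum 'I_n].

From mathcomp Require Import all_boot all_order all_algebra all_fingroup.
From mathcomp Require Import boolp classical_sets cardinality reals.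
From mathcomp Require Import lra zify.
Import Order.TTheory GRing.Theory Num.Theory.
Local Open Scope ring_scope.
Set Implicit Arguments. Unset Strict Implicit. Unset Printing Implicit Defensive.

(* Let y_t = T^(k+t) x be the orbit point read off as the t-th letter of w u, and m = |w|.
   The cylinder of u is an interval containing y_0 and y_m but, u being a return word,
   no y_r with 0 < r < m; hence y_0, ..., y_(m-1) keep their relative order when y_m is
   identified with y_0. On these m points the cyclic shift t |-> t + 1 mod m behaves like T:
   it preserves the order of points coded by the same letter, and it sends the points coded
   by a below those coded by b whenever pi^-1 a < pi^-1 b. Reading the orbit from two
   positions therefore compares the corresponding rotations of w lexicographically, so the
   sorted rotations have their last letters in pi^-1-increasing order: this is the
   pi-clustering of bwt w. *)

Lemma sumr_rank_ltD_le (R : numDomainType) (I : finType) (lam : I -> R) (g : I -> nat)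
    (a b : I) :
  (forall c, 0 <= lam c) -> (g b < g a)%N ->
  \sum_(c | (g c < g b)%N) lam c + lam b <= \sum_(c | (g c < g a)%N) lam c.
Proof.
move=> lam_ge0 gba.
rewrite [leRHS](bigID (fun c => (g c < g b)%N)) /=.
have -> : \sum_(c | (g c < g a)%N && (g c < g b)%N) lam c = \sum_(c | (g c < g b)%N) lam c.
  by apply: eq_bigl => c; apply/andP/idP => [[]//|gcb]; split=> //; exact: ltn_trans gba.
rewrite lerD2l (bigD1 b) /=; last by rewrite gba ltnn.
by rewrite lerDl sumr_ge0.
Qed.

Section IntervalExchange.
Variables (R : realType) (n : nat) (pi : {perm 'I_n}) (lam : 'I_n -> R) (l : R).
Hypothesis lam_gt0 : forall a, 0 < lam a.

Local Notation T := (iet pi lam l).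
Local Notation in_Ia := (in_Ia lam l).

Lemma in_Ia_ltn_lt (a b : 'I_n) (p q : R) :
  in_Ia a p -> in_Ia b q -> (b < a)%N -> q < p.
Proof.
move=> /andP[pa1 pa2] /andP[qb1 qb2] ba.
have := sumr_rank_ltD_le (fun c => ltW (lam_gt0 c)) ba.
by move: pa1 pa2 qb1 qb2; rewrite /left_end /lsum => *; lra.
Qed.

Lemma in_Ia_inj (a b : 'I_n) (p : R) : in_Ia a p -> in_Ia b p -> a = b.
Proof.
move=> pa pb; case: (ltngtP a b) => [ab|ba|/val_inj //].
- by have := in_Ia_ltn_lt pb pa ab; rewrite ltxx.
- by have := in_Ia_ltn_lt pa pb ba; rewrite ltxx.
Qed.

Lemma in_Ia_lt_leq (a b : 'I_n) (p q : R) :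
  in_Ia a p -> in_Ia b q -> p < q -> (a <= b)%N.
Proof.
move=> pa qb pq; rewrite leqNgt; apply/negP => ba.
by have := in_Ia_ltn_lt pa qb ba; rewrite ltNge (ltW pq).
Qed.

Lemma in_Ia_between (a : 'I_n) (p q r : R) :
  in_Ia a p -> in_Ia a r -> p <= q <= r -> in_Ia a q.
Proof. by rewrite /in_Ia => /andP[? ?] /andP[? ?] /andP[? ?]; apply/andP; split; lra. Qed.

Lemma iet_in_Ia (a : 'I_n) (p : R) : in_Ia a p -> T p = p + tau pi lam a.
Proof.
move=> pa; rewrite /iet (bigD1 a) //= pa big1 ?addr0 // => b ba.
by case pb: (in_Ia b p) => //; move: ba; rewrite (in_Ia_inj pa pb) eqxx.
Qed.

Lemma iet_lt_in_Ia (a : 'I_n) (p q : R) : in_Ia a p -> in_Ia a q -> (p < q) = (T p < T q).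
Proof. by move=> pa qa; rewrite (iet_in_Ia pa) (iet_in_Ia qa) ltrD2r. Qed.

Lemma iet_le_in_Ia (a : 'I_n) (p q : R) : in_Ia a p -> in_Ia a q -> (p <= q) = (T p <= T q).
Proof. by move=> pa qa; rewrite (iet_in_Ia pa) (iet_in_Ia qa) lerD2r. Qed.

Lemma iet_lt_perm (a b : 'I_n) (p q : R) :
  in_Ia a p -> in_Ia b q -> ((pi^-1)%g a < (pi^-1)%g b)%N -> T p < T q.
Proof.
move=> pa qb ab; rewrite (iet_in_Ia pa) (iet_in_Ia qb).
have := sumr_rank_ltD_le (g := fun c => (pi^-1)%g c) (fun c => ltW (lam_gt0 c)) ab.
by move: pa qb; rewrite /tau /in_Ia /left_end => /andP[? ?] /andP[? ?]; lra.
Qed.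

Fixpoint in_cylinder (u : seq 'I_n) (p : R) : bool :=
  if u is a :: u' then in_Ia a p && in_cylinder u' (T p) else true.

Lemma in_cylinderP (c0 : 'I_n) (u : seq 'I_n) (p : R) :
  reflect (forall i, (i < size u)%N -> in_Ia (nth c0 u i) (iter i T p)) (in_cylinder u p).
Proof.
elim: u p => [|a u IH] p /=; first by constructor.
apply: (iffP andP) => [[pa /IH up] [|i] //= ui|up].
  by have := up i ui; rewrite -iterSr.
by split; [exact: (up 0%N) | apply/IH => i ui; rewrite -iterSr; exact: (up i.+1)].
Qed.

Lemma in_cylinder_between (u : seq 'I_n) (p q r : R) :
  in_cylinder u p -> in_cylinder u r -> p <= q <= r -> in_cylinder u q.
Proof.
elim: u p q r => //= a u IH p q r /andP[pa up] /andP[ra ur] pqr.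
have qa := in_Ia_between pa ra pqr.
rewrite qa; apply: IH up ur _.
by rewrite -(iet_le_in_Ia pa qa) -(iet_le_in_Ia qa ra).
Qed.

End IntervalExchange.

Lemma lt_mod_of_gap (R : realDomainType) (y : nat -> R) (m : nat) :
  (forall r, (0 < r < m)%N -> ~~ (y 0%N <= y r <= y m) && ~~ (y m <= y r <= y 0%N)) ->
  forall s1 s2, (0 < s1 <= m)%N -> (0 < s2 <= m)%N -> s1 != s2 ->
  y s1 < y s2 -> y (s1 %% m)%N < y (s2 %% m)%N.
Proof.
move=> gap s1 s2 /andP[s1_gt0 s1_le] /andP[s2_gt0 s2_le] s12 lt12.
have [s1m|s1_lt] : s1 = m \/ (s1 < m)%N by lia.
  subst s1; have /andP[_] := gap s2 ltac:(lia).
  rewrite (ltW lt12) /= -ltNge => lt02.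
  by rewrite modnn modn_small //; lia.
have [s2m|s2_lt] : s2 = m \/ (s2 < m)%N by lia.
  subst s2; have /andP[] := gap s1 ltac:(lia).
  rewrite (ltW lt12) andbT -ltNge => lt10 _.
  by rewrite modnn modn_small.
by rewrite !modn_small.
Qed.

Definition cyclic_window (T : Type) (x0 : T) (s : seq T) (a N : nat) : seq T :=
  [seq nth x0 s (t %% size s) | t <- iota a N].

Lemma nth_rot_mod (T : Type) (x0 : T) (s : seq T) (a t : nat) :
  (a <= size s)%N -> (t < size s)%N -> nth x0 (rot a s) t = nth x0 s ((a + t) %% size s).
Proof.
move=> a_le t_lt; rewrite /rot nth_cat size_drop; case: ifP => t_small.
  by rewrite nth_drop modn_small //; lia.
rewrite nth_take; last by lia.
have -> : (a + t = (t - (size s - a)) + size s)%N by lia.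
by rewrite modnDr modn_small //; lia.
Qed.

Lemma rot_cyclic_window (T : Type) (x0 : T) (s : seq T) (a : nat) :
  (a <= size s)%N -> rot a s = cyclic_window x0 s a (size s).
Proof.
move=> a_le; apply: (@eq_from_nth _ x0); first by rewrite size_rot size_map size_iota.
move=> t; rewrite size_rot => t_lt.
by rewrite nth_rot_mod // (nth_map 0%N) ?size_iota // nth_iota.
Qed.

Lemma last_rot_succ (T : Type) (x0 : T) (s : seq T) (i : nat) :
  (i < size s)%N -> last x0 (rot (i.+1 %% size s) s) = nth x0 s i.
Proof.
move=> i_lt; have s_gt0 : (0 < size s)%N by lia.
rewrite -nth_last size_rot nth_rot_mod ?ltn_pmod ?leq_mod ?prednK //; last by lia.
by rewrite modnDml addSnnS prednK // modnDr modn_small.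
Qed.

Lemma lex_le_total (n : nat) : total (@lex_le n).
Proof.
elim=> [|x s IH] [|y t] //=.
case: (ltngtP x y) => [xy|yx|/val_inj ->] //=; first by rewrite orbT.
by rewrite eqxx /= IH.
Qed.

Section CyclicCoding.
Variables (R : realDomainType) (n : nat) (pi : {perm 'I_n}) (c0 : 'I_n) (w : seq 'I_n).
Variable z : nat -> R.
Local Notation m := (size w).

(* z places the positions of the cyclic word w on a line, on which the cyclic shift acts
   like an interval exchange whose intervals are labelled by the letters of w. *)

Hypothesis z_letter : forall i j, (i < m)%N -> (j < m)%N ->
  z i < z j -> (nth c0 w i <= nth c0 w j)%N.
Hypothesis z_succ : forall i j, (i < m)%N -> (j < m)%N -> i != j ->
  nth c0 w i = nth c0 w j -> z i < z j -> z (i.+1 %% m)%N < z (j.+1 %% m)%N.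
Hypothesis z_succ_perm : forall i j, (i < m)%N -> (j < m)%N ->
  ((pi^-1)%g (nth c0 w i) < (pi^-1)%g (nth c0 w j))%N -> z (i.+1 %% m)%N < z (j.+1 %% m)%N.

Lemma lex_cyclic_window (N a b : nat) : (0 < m)%N ->
  (a %% m != b %% m)%N -> z (a %% m)%N < z (b %% m)%N ->
  lex_le (cyclic_window c0 w b N) (cyclic_window c0 w a N) ->
  cyclic_window c0 w a N = cyclic_window c0 w b N.
Proof.
move=> m_gt0; elim: N a b => // N IH a b ab zab /=.
have a_lt := ltn_pmod a m_gt0; have b_lt := ltn_pmod b m_gt0.
rewrite ltnNge (z_letter a_lt b_lt zab) /= => /andP[/eqP wba lex_ab].
congr (_ :: _); first exact: esym wba.
apply: IH lex_ab.
  by rewrite -[a.+1]addn1 -[b.+1]addn1 eqn_modDr.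
have modS c : ((c %% m).+1 %% m = c.+1 %% m)%N.
  by rewrite -[(c %% m).+1]addn1 -[c.+1]addn1 modnDml.
by rewrite -(modS a) -(modS b) z_succ.
Qed.

Lemma rot_lex_perm (i j : nat) : (i < m)%N -> (j < m)%N ->
  ((pi^-1)%g (nth c0 w i) < (pi^-1)%g (nth c0 w j))%N ->
  ~~ lex_le (rot (j.+1 %% m) w) (rot (i.+1 %% m) w).
Proof.
move=> i_lt j_lt wij; have m_gt0 : (0 < m)%N by lia.
have mod_le c : (c %% m <= m)%N by exact/ltnW/ltn_pmod.
have ij : i != j by apply: contraTneq wij => ->; rewrite ltnn.
have ij_mod : (i.+1 %% m != j.+1 %% m)%N.
  by rewrite -[i.+1]addn1 -[j.+1]addn1 eqn_modDr !modn_small.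
apply/negP; rewrite !(rot_cyclic_window c0) ?mod_le // => lex_ji.
have := lex_cyclic_window m_gt0 _ _ lex_ji; rewrite !modn_mod.
move=> /(_ ij_mod (z_succ_perm i_lt j_lt wij)) /(congr1 (last c0)).
rewrite -!rot_cyclic_window ?mod_le // !last_rot_succ // => w_ij.
by move: wij; rewrite w_ij ltnn.
Qed.

End CyclicCoding.

Lemma count_sum_count_mem (T : finType) (P : pred T) (s : seq T) :
  count P s = (\sum_(y : T) P y * count_mem y s)%N.
Proof.
elim: s => [|x s IH] /=; first by rewrite big1 // => y _; rewrite muln0.
rewrite IH [RHS](eq_bigr (fun y => P y * (x == y) + P y * count_mem y s)%N); last first.
  by move=> y _; rewrite mulnDr.
rewrite big_split /=; congr (_ + _).
rewrite (bigD1 x) //= eqxx muln1 big1 ?addn0 // => y yx.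
by rewrite eq_sym (negbTE yx) muln0.
Qed.

Lemma perm_flatten_nseq_count (n : nat) (pi : {perm 'I_n}) (w : seq 'I_n) :
  perm_eq (flatten [seq nseq (count_mem (pi a) w) (pi a) | a <- enum 'I_n]) w.
Proof.
apply/seq.permP => P; rewrite count_flatten -map_comp sumnE big_map big_enum /=.
rewrite count_sum_count_mem [RHS](reindex_inj (@perm_inj _ pi)) /=.
by apply: eq_bigr => a _; rewrite count_nseq.
Qed.

Lemma sorted_flatten_nseq_perm (n : nat) (pi : {perm 'I_n}) (f : 'I_n -> nat) :
  sorted (fun p q : 'I_n => ((pi^-1)%g p <= (pi^-1)%g q)%N)
    (flatten [seq nseq (f a) (pi a) | a <- enum 'I_n]).
Proof.
apply: pairwise_sorted.
have : pairwise (fun a b : 'I_n => (a < b)%N) (enum 'I_n).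
  rewrite -sorted_pairwise; last exact: ltn_trans.
  by have := iota_ltn_sorted 0 n; rewrite -val_enum_ord sorted_map.
elim: (enum 'I_n) => //= a s IH /andP[a_lt /IH s_sorted].
rewrite pairwise_cat s_sorted andbT.
have -> : pairwise (fun p q : 'I_n => ((pi^-1)%g p <= (pi^-1)%g q)%N) (nseq (f a) (pi a)).
  by elim: (f a) => //= k ->; rewrite all_nseq leqnn orbT.
rewrite andbT.
apply/allrelP => p q; rewrite mem_nseq => /andP[_ /eqP ->].
move=> /flattenP [r /mapP [b bs ->]]; rewrite mem_nseq => /andP[_ /eqP ->].
by rewrite !permK ltnW // (allP a_lt).
Qed.

Lemma pmap_ohead_rev (T : Type) (x0 : T) (s : seq (seq T)) :
  all (fun r => 0 < size r)%N s -> pmap (fun r => ohead (rev r)) s = map (last x0) s.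
Proof.
elim: s => //= r s IH /andP[r_gt0 /IH ->].
by case/lastP: r r_gt0 => // r x _; rewrite rev_rcons last_rcons.
Qed.

Lemma pi_clustering_of_rot_lex (n : nat) (pi : {perm 'I_n}) (c0 : 'I_n) (w : seq 'I_n) :
  (forall i j, (i < size w)%N -> (j < size w)%N ->
     ((pi^-1)%g (nth c0 w i) < (pi^-1)%g (nth c0 w j))%N ->
     ~~ lex_le (rot (j.+1 %% size w) w) (rot (i.+1 %% size w) w)) ->
  pi_clustering pi w.
Proof.
move=> rot_lex; rewrite /pi_clustering /bwt.
set m := size w; set rots := [seq rot a w | a <- iota 0 m].
pose le_pi := fun p q : 'I_n => ((pi^-1)%g p <= (pi^-1)%g q)%N.
have rotsP r : r \in rots -> exists2 i, (i < m)%N & r = rot (i.+1 %% m) w.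
  case/mapP => a; rewrite mem_iota => /andP[_ a_lt] ->.
  exists ((a + m.-1) %% m)%N; first by rewrite ltn_pmod //; lia.
  by rewrite -addn1 modnDml -addnA addn1 prednK ?modnDr ?modn_small //; lia.
rewrite (pmap_ohead_rev c0) ?all_sort; last first.
  by apply/allP => r /mapP [a]; rewrite mem_iota => /andP[_ a_lt] ->; rewrite size_rot; lia.
apply: (@sorted_eq _ le_pi).
- by move=> ? ? ?; apply: leq_trans.
- move=> p q /andP[pq qp]; apply: (@perm_inj _ (pi^-1)%g); apply: val_inj.
  by apply/eqP; rewrite eqn_leq; apply/andP.
- apply: (@homo_sorted_in _ _ (mem rots) _ (@lex_le n)).
  + move=> _ _ /rotsP[i i_lt ->] /rotsP[j j_lt ->] lex_ij.
    rewrite /le_pi leqNgt !last_rot_succ //; apply: contraL lex_ij.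
    exact: rot_lex.
  + by apply/allP => r; rewrite mem_sort.
  + exact/sort_sorted/lex_le_total.
- exact: sorted_flatten_nseq_perm.
- rewrite (permPr (perm_flatten_nseq_count pi w)).
  rewrite (permPl (perm_map _ (permEl (perm_sort _ _)))).
  have -> : map (last c0) rots = rot m.-1 w.
    apply: (@eq_from_nth _ c0); rewrite /rots !size_map size_iota ?size_rot // => t t_lt.
    rewrite -map_comp (nth_map 0%N) ?size_iota // nth_iota //= add0n -nth_last size_rot.
    by rewrite !nth_rot_mod; [rewrite addnC | lia..].
  by rewrite perm_rot.
Qed.

Section ReturnWord.
Variables (R : realType) (n : nat) (pi : {perm 'I_n}) (lam : 'I_n -> R) (l : R).
Hypothesis lam_gt0 : forall a, 0 < lam a.
Variables (c0 : 'I_n) (u w : seq 'I_n) (y : nat -> R).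
Local Notation T := (iet pi lam l).
Local Notation m := (size w).

Hypothesis y_succ : forall t, y t.+1 = T (y t).
Hypothesis y_code : forall t, (t < size (w ++ u))%N -> in_Ia lam l (nth c0 (w ++ u) t) (y t).
Hypothesis u_prefix : prefix u (w ++ u).
Hypothesis no_inner_u :
  ~ (exists p s : seq 'I_n, [/\ (0 < size p)%N, (0 < size s)%N & w ++ u = p ++ u ++ s]).

Lemma iter_orbit (i t : nat) : iter i T (y t) = y (t + i).
Proof. by elim: i => [|i IH] /=; rewrite ?addn0 // IH addnS y_succ. Qed.

Lemma in_cylinder_orbit (r : nat) : (r <= m)%N ->
  in_cylinder pi lam l u (y r) = (take (size u) (drop r (w ++ u)) == u).
Proof.
move=> r_le; have size_u : size (take (size u) (drop r (w ++ u))) = size u.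
  by rewrite size_takel // size_drop size_cat; lia.
have nth_u i : (i < size u)%N ->
    nth c0 (take (size u) (drop r (w ++ u))) i = nth c0 (w ++ u) (r + i).
  by move=> i_lt; rewrite nth_take // nth_drop.
apply/(in_cylinderP _ _ _ c0)/eqP => [in_u|<- i]; last first.
  by rewrite size_u iter_orbit => i_lt; rewrite nth_u //; apply: y_code; rewrite size_cat; lia.
apply: (@eq_from_nth _ c0) => // i; rewrite size_u => i_lt.
rewrite nth_u //; apply: (in_Ia_inj lam_gt0 (y_code _)); first by rewrite size_cat; lia.
by rewrite -iter_orbit; exact: in_u.
Qed.

Lemma in_cylinder_orbit0 : in_cylinder pi lam l u (y 0%N).
Proof. by rewrite in_cylinder_orbit // drop0 -prefixE. Qed.

Lemma in_cylinder_orbit_size : in_cylinder pi lam l u (y m).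
Proof. by rewrite in_cylinder_orbit // drop_size_cat // take_size. Qed.

Lemma notin_cylinder_orbit (r : nat) : (0 < r < m)%N -> ~~ in_cylinder pi lam l u (y r).
Proof.
move=> /andP[r_gt0 r_lt]; rewrite in_cylinder_orbit ?(ltnW r_lt) //; apply/eqP => take_u.
apply: no_inner_u; exists (take r (w ++ u)), (drop (r + size u) (w ++ u)); split.
- by rewrite size_takel // size_cat; lia.
- by rewrite size_drop size_cat; lia.
- rewrite -{1}(cat_take_drop r (w ++ u)) -(cat_take_drop (size u) (drop r _)).
  by rewrite take_u drop_drop addnC.
Qed.

Lemma orbit_gap (r : nat) : (0 < r < m)%N ->
  ~~ (y 0%N <= y r <= y m) && ~~ (y m <= y r <= y 0%N).
Proof.
move=> r_inner; have := notin_cylinder_orbit r_inner.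
by apply: contraNT; rewrite negb_and !negbK => /orP[] /(in_cylinder_between lam_gt0 _ _)->;
  rewrite ?in_cylinder_orbit0 ?in_cylinder_orbit_size.
Qed.

Lemma orbit_succ_lt (i j : nat) : (i < m)%N -> (j < m)%N -> i != j ->
  y i.+1 < y j.+1 -> y (i.+1 %% m)%N < y (j.+1 %% m)%N.
Proof. by move=> i_lt j_lt ij; apply: (lt_mod_of_gap orbit_gap) => //; lia. Qed.

Lemma return_word_pi_clustering : pi_clustering pi w.
Proof.
have y_w t : (t < m)%N -> in_Ia lam l (nth c0 w t) (y t).
  by move=> t_lt; have := @y_code t; rewrite nth_cat t_lt size_cat; apply; lia.
apply: (pi_clustering_of_rot_lex (c0 := c0)); apply: (rot_lex_perm (z := y)) => i j i_lt j_lt.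
- exact: (in_Ia_lt_leq lam_gt0 (y_w _ i_lt) (y_w _ j_lt)).
- move=> ij w_ij y_ij; apply: orbit_succ_lt => //.
  by rewrite !y_succ -(iet_lt_in_Ia pi lam_gt0 (y_w _ i_lt)) // w_ij y_w.
- move=> w_ij; apply: orbit_succ_lt => //.
    by apply: contraTneq w_ij => ->; rewrite ltnn.
  by rewrite !y_succ; exact: (iet_lt_perm lam_gt0 (y_w _ i_lt) (y_w _ j_lt)).
Qed.

End ReturnWord.

Theorem lemma6p2 (R : realType) (n : nat) (pi : {perm 'I_n}) (lam : 'I_n -> R) (l : R) :
  (1 <= n)%N ->
  (forall a, 0 < lam a) ->
  regular pi lam l ->
  forall u w : seq 'I_n,
    in_lang pi lam l u -> return_word pi lam l u w -> pi_clustering pi w.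
Proof.
move=> n_gt0 lam_gt0 _ u w _ [[x [_ [k code]]] u_prefix no_inner_u].
pose c0 : 'I_n := Ordinal n_gt0.
apply: (return_word_pi_clustering (l := l) lam_gt0 (c0 := c0)
  (y := fun t => iter (k + t) (iet pi lam l) x) _ _ u_prefix no_inner_u) => [t | t t_lt].
  by rewrite addnS.
by apply: code; rewrite onthE (nth_map c0).
Qed.
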